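(* Let $H(\cdot)=H(\cdot;b_r)$ be as in the context, with $b=b_r\vee b^{**}$. Then: (I) $H'(x)>0$ for all $x\ge0$. (II) $H(0)\ge0$ if and only if $r_1e^{r_1b}-r_2e^{r_2b}\le\frac{r_1-r_2}{k}$; and $H(0)\le0$ if and only if $r_1e^{r_1b}-r_2e^{r_2b}\ge\frac{r_1-r_2}{k}$. (III) Condition (K) is equivalent to $b^{**}\le b^*$, which is equivalent to $r_1e^{r_1b^{**}}-r_2e^{r_2b^{**}}\le\frac{r_1-r_2}{k}$. Likewise, (K) with reversed inequality is equivalent to $b^{**}\ge b^*$, which is equivalent to $r_1e^{r_1b^{**}}-r_2e^{r_2b^{**}}\ge\frac{r_1-r_2}{k}$. (IV) If $b_r\le b^{**}$, then $H(0)\ge0$ is equivalent to (K), and $H(0)\le0$ is equivalent to (K) with reversed inequality. (V) If (K) holds with reversed inequality, then $H(0;b_r)\le0$ for every $b_r\ge0$. (VI) If (K) holds, then the equation $r_1e^{r_1\hat b}-r_2e^{r_2\hat b}=\frac{r_1-r_2}{k}$ has a unique solution $\hat b$ in $[b^{**},\infty)$, and $H(0;b_r)\ge0$ if and only if $b_r\le\hat b$.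
   Context: Fix parameters $\mu>0$, $\sigma>0$, $\alpha>0$ and $k>1$. Set $r_1:=-\frac{\mu}{\sigma^2}+\sqrt{\frac{\mu^2}{\sigma^4}+\frac{2\alpha}{\sigma^2}}$ and $r_2:=-\frac{\mu}{\sigma^2}-\sqrt{\frac{\mu^2}{\sigma^4}+\frac{2\alpha}{\sigma^2}}$ (so $r_2<0<r_1$ and $r_2^2>r_1^2$). Let $b^*:=\frac{\log(r_2^2/r_1^2)}{r_1-r_2}>0$ and let $b^{**}>0$ be the unique positive solution of $r_1e^{-r_2b}-r_2e^{-r_1b}=k(r_1-r_2)$. For a dividend payout barrier $b_r\ge0$ put $b=b_r\vee b^{**}$ and define $H(x;b_r):=\frac{1}{e^{r_1b}-e^{r_2b}}\Big(\frac{1-ke^{r_2b}}{r_1}e^{r_1x}-\frac{1-ke^{r_1b}}{r_2}e^{r_2x}\Big)$ for $0\le x\le b$ and $H(x;b_r):=x-b+\frac{1}{e^{r_1b}-e^{r_2b}}\Big(\frac{1-ke^{r_2b}}{r_1}e^{r_1b}-\frac{1-ke^{r_1b}}{r_2}e^{r_2b}\Big)$ for $x>b$. Condition (K) is the inequality $k\le\dfrac{r_1-r_2}{r_1\left(\frac{r_2^2}{r_1^2}\right)^{\frac{r_1}{r_1-r_2}}-r_2\left(\frac{r_2^2}{r_1^2}\right)^{\frac{r_2}{r_1-r_2}}}$. *)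

From Stdlib Require Import Reals Lra.
Open Scope R_scope.

Definition r1 (mu sigma alpha : R) : R :=
  - mu / sigma ^ 2 + sqrt (mu ^ 2 / sigma ^ 4 + 2 * alpha / sigma ^ 2).
Definition r2 (mu sigma alpha : R) : R :=
  - mu / sigma ^ 2 - sqrt (mu ^ 2 / sigma ^ 4 + 2 * alpha / sigma ^ 2).

Definition bstar (mu sigma alpha : R) : R :=
  ln (r2 mu sigma alpha ^ 2 / r1 mu sigma alpha ^ 2)
    / (r1 mu sigma alpha - r2 mu sigma alpha).

Definition bss_eq (mu sigma alpha k b : R) : Prop :=
  r1 mu sigma alpha * exp (- r2 mu sigma alpha * b)
  - r2 mu sigma alpha * exp (- r1 mu sigma alpha * b)
  = k * (r1 mu sigma alpha - r2 mu sigma alpha).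

Definition G (mu sigma alpha b : R) : R :=
  r1 mu sigma alpha * exp (r1 mu sigma alpha * b)
  - r2 mu sigma alpha * exp (r2 mu sigma alpha * b).

(* The function H(x; b_r) with b = b_r \/ b**.  For x <= b the first
   (analytic) formula is used; this also extends H to x < 0 by the same
   formula (only x >= 0 is relevant). *)
Definition Hfun (mu sigma alpha k bss br x : R) : R :=
  let a1 := r1 mu sigma alpha in
  let a2 := r2 mu sigma alpha in
  let b := Rmax br bss in
  let D := exp (a1 * b) - exp (a2 * b) in
  let low y := / D * ((1 - k * exp (a2 * b)) / a1 * exp (a1 * y)
                      - (1 - k * exp (a1 * b)) / a2 * exp (a2 * y)) in
  if Rle_dec x b then low x else x - b + low b.

Definition Kbound (mu sigma alpha : R) : R :=
  let a1 := r1 mu sigma alpha in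
  let a2 := r2 mu sigma alpha in
  let q := a2 ^ 2 / a1 ^ 2 in
  (a1 - a2) / (a1 * Rpower q (a1 / (a1 - a2)) - a2 * Rpower q (a2 / (a1 - a2))).

Definition condK (mu sigma alpha k : R) : Prop := k <= Kbound mu sigma alpha.
Definition condK_rev (mu sigma alpha k : R) : Prop := k >= Kbound mu sigma alpha.

From Stdlib Require Import Reals Lra Psatz.
From Coquelicot Require Import Coquelicot.
Set Bullet Behavior "Strict Subproofs".
Open Scope R_scope.

(* Three functions carry the argument:
   - G(b) = a1 e^{a1 b} - a2 e^{a2 b}, with G'(b) = a1^2 e^{a1 b} - a2^2 e^{a2 b};
     G' changes sign exactly at bst = ln(a2^2/a1^2)/(a1-a2), so G decreases up to
     bst and increases afterwards;
   - phi(b) = a1 e^{-a2 b} - a2 e^{-a1 b}, increasing on [0,oo), whose level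
     k (a1 - a2) defines bss;
   - H(.; b), whose derivative is positive on (-oo, b] and equal to 1 from b
     on, and whose value at 0 has the sign of (a1 - a2) - k G(b)  (items I, II).
   The identity (G phi - (a1-a2)^2) e^{a1 b} e^{a2 b} = G'(b) (e^{a1 b} - e^{a2 b})
   links them: at bss it gives sign(k G(bss) - (a1-a2)) = sign(bss - bst), and at
   bst it identifies the bound of condition (K) with phi(bst)/(a1-a2), so (K)
   reads phi(bss) <= phi(bst), i.e. bss <= bst  (item III).  Items IV-VI then
   follow from II, III and the monotonicity of G on either side of bst. *)

Lemma strictly_increasing_of_derivative (f f' : R -> R) (x y : R) :
  (forall t, x <= t <= y -> derivable_pt_lim f t (f' t)) ->
  (forall t, x < t < y -> 0 < f' t) -> x < y -> f x < f y.
Proof.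
  intros Hder Hpos Hxy.
  destruct (MVT_cor2 f f' x y Hxy Hder) as [t [Hmvt Ht]].
  specialize (Hpos t Ht). nra.
Qed.

Lemma derivable_pt_lim_glue (f g h : R -> R) (b l : R) :
  derivable_pt_lim g b l -> derivable_pt_lim h b l -> g b = h b ->
  (forall y, y <= b -> f y = g y) -> (forall y, b < y -> f y = h y) ->
  derivable_pt_lim f b l.
Proof.
  intros Hg Hh Hgh Hleft Hright eps Heps.
  destruct (Hg eps Heps) as [d1 Hd1]. destruct (Hh eps Heps) as [d2 Hd2].
  assert (Hd : 0 < Rmin d1 d2) by (apply Rmin_pos; apply cond_pos).
  exists (mkposreal _ Hd). intros t Ht0 Ht. simpl in Ht.
  pose proof (Rmin_l d1 d2). pose proof (Rmin_r d1 d2).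
  rewrite (Hleft b) by lra.
  destruct (Rle_dec t 0).
  - rewrite Hleft by lra. apply Hd1; lra.
  - rewrite Hright, Hgh by lra. apply Hd2; lra.
Qed.

Lemma le_div_iff (x y k : R) : 0 < k -> (x <= y / k <-> k * x <= y).
Proof. intros Hk. rewrite <- Rle_div_r by lra. rewrite Rmult_comm. tauto. Qed.

Lemma ge_div_iff (x y k : R) : 0 < k -> (x >= y / k <-> k * x >= y).
Proof.
  intros Hk. split; intros H; apply Rle_ge; apply Rge_le in H.
  - apply Rle_div_l in H; lra.
  - apply Rle_div_l; lra.
Qed.

Section Roots.

Variables a1 a2 : R.
Hypothesis a1_pos : 0 < a1.
Hypothesis a2_neg : a2 < 0.

Definition Gf (b : R) : R := a1 * exp (a1 * b) - a2 * exp (a2 * b).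
Definition dGf (b : R) : R := a1 ^ 2 * exp (a1 * b) - a2 ^ 2 * exp (a2 * b).
Definition phi (b : R) : R := a1 * exp (- a2 * b) - a2 * exp (- a1 * b).
Definition bst : R := ln (a2 ^ 2 / a1 ^ 2) / (a1 - a2).

Lemma Gf_derivative (b : R) : derivable_pt_lim Gf b (dGf b).
Proof. apply is_derive_Reals. unfold Gf, dGf. auto_derive; auto. ring. Qed.

Lemma Gf_continuous : continuity Gf.
Proof. intros b. apply derivable_continuous_pt. exists (dGf b). apply Gf_derivative. Qed.

Lemma G_phi_identity (b : R) :
  (Gf b * phi b - (a1 - a2) ^ 2) * (exp (a1 * b) * exp (a2 * b))
  = dGf b * (exp (a1 * b) - exp (a2 * b)).
Proof.
  unfold Gf, phi, dGf.
  replace (- a2 * b) with (- (a2 * b)) by ring.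
  replace (- a1 * b) with (- (a1 * b)) by ring.
  rewrite !exp_Ropp. pose proof (exp_pos (a1 * b)). pose proof (exp_pos (a2 * b)).
  field. lra.
Qed.

Lemma exp_gap_pos (b : R) : 0 < b -> exp (a2 * b) < exp (a1 * b).
Proof. intros Hb. apply exp_increasing. nra. Qed.

(* phi increases on [0, oo): phi' = a1 a2 (e^{-a1 b} - e^{-a2 b}) > 0. *)
Lemma phi_le_iff (x y : R) : 0 <= x -> 0 <= y -> (phi x <= phi y <-> x <= y).
Proof.
  assert (Hincr : forall u v, 0 <= u -> u < v -> phi u < phi v).
  { intros u v Hu Huv.
    apply (strictly_increasing_of_derivative _
             (fun t => - a1 * a2 * exp (- a2 * t) + a1 * a2 * exp (- a1 * t))); auto.
    - intros t _. apply is_derive_Reals. unfold phi. auto_derive; auto. ring.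
    - intros t Ht. assert (exp (- a1 * t) < exp (- a2 * t)) by (apply exp_increasing; nra).
      assert (a1 * a2 < 0) by nra. nra. }
  intros Hx Hy. destruct (Rtotal_order x y) as [h|[h|h]].
  - pose proof (Hincr x y Hx h). lra.
  - subst; lra.
  - pose proof (Hincr y x Hy h). lra.
Qed.

(* The negative root dominates, a2^2 > a1^2, as is the case when mu > 0. *)
Section Dominant.

Hypothesis sum_neg : a1 + a2 < 0.

Lemma ratio_gt1 : 1 < a2 ^ 2 / a1 ^ 2.
Proof. apply (Rmult_lt_reg_r (a1 ^ 2)); [nra|]. field_simplify; [nra|lra]. Qed.

Lemma bst_pos : 0 < bst.
Proof.
  pose proof ratio_gt1. unfold bst. apply Rdiv_lt_0_compat; [|lra].
  rewrite <- ln_1. apply ln_increasing; lra.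
Qed.

Lemma dGf_factor (b : R) :
  dGf b = a2 ^ 2 * exp (a2 * b) * (exp ((a1 - a2) * (b - bst)) - 1).
Proof.
  pose proof ratio_gt1.
  replace ((a1 - a2) * (b - bst)) with (a1 * b + (- (a2 * b) + - ln (a2 ^ 2 / a1 ^ 2)))
    by (unfold bst; field; lra).
  rewrite !exp_plus, !exp_Ropp, exp_ln by lra. unfold dGf.
  pose proof (exp_pos (a2 * b)). field. split; nra.
Qed.

Lemma dGf_sign (b : R) : (b < bst -> dGf b < 0) /\ (bst < b -> 0 < dGf b).
Proof.
  rewrite dGf_factor. pose proof (exp_pos (a2 * b)).
  assert (0 < a2 ^ 2 * exp (a2 * b)) by (apply Rmult_lt_0_compat; nra).
  split; intros Hb.
  - assert (exp ((a1 - a2) * (b - bst)) < 1) by (rewrite <- exp_0; apply exp_increasing; nra).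
    nra.
  - assert (1 < exp ((a1 - a2) * (b - bst))) by (rewrite <- exp_0; apply exp_increasing; nra).
    nra.
Qed.

Lemma dGf_bst : dGf bst = 0.
Proof. rewrite dGf_factor, Rminus_diag, Rmult_0_r, exp_0. ring. Qed.

Lemma Gf_increasing (x y : R) : bst <= x -> x < y -> Gf x < Gf y.
Proof.
  intros Hx Hxy. apply (strictly_increasing_of_derivative _ dGf); auto.
  - intros t _. apply Gf_derivative.
  - intros t Ht. apply dGf_sign. lra.
Qed.

Lemma Gf_decreasing (x y : R) : x < y -> y <= bst -> Gf y < Gf x.
Proof.
  intros Hxy Hy. enough (- Gf x < - Gf y) by lra.
  apply (strictly_increasing_of_derivative (fun t => - Gf t) (fun t => - dGf t)); auto.
  - intros t _. apply derivable_pt_lim_opp, Gf_derivative.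
  - intros t Ht. enough (dGf t < 0) by lra. apply dGf_sign. lra.
Qed.

(* At bst, G phi = (a1-a2)^2, which turns the bound of (K) into phi(bst)/(a1-a2). *)
Lemma Gf_phi_at_bst : Gf bst * phi bst = (a1 - a2) ^ 2.
Proof.
  pose proof (G_phi_identity bst) as Hid. rewrite dGf_bst, Rmult_0_l in Hid.
  pose proof (exp_pos (a1 * bst)). pose proof (exp_pos (a2 * bst)).
  assert (0 < exp (a1 * bst) * exp (a2 * bst)) by (apply Rmult_lt_0_compat; lra).
  nra.
Qed.

Lemma Kbound_phi :
  (a1 - a2) / (a1 * Rpower (a2 ^ 2 / a1 ^ 2) (a1 / (a1 - a2))
               - a2 * Rpower (a2 ^ 2 / a1 ^ 2) (a2 / (a1 - a2)))
  = phi bst / (a1 - a2).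
Proof.
  unfold Rpower.
  replace (a1 / (a1 - a2) * ln (a2 ^ 2 / a1 ^ 2)) with (a1 * bst) by (unfold bst; field; lra).
  replace (a2 / (a1 - a2) * ln (a2 ^ 2 / a1 ^ 2)) with (a2 * bst) by (unfold bst; field; lra).
  change (a1 * exp (a1 * bst) - a2 * exp (a2 * bst)) with (Gf bst).
  pose proof Gf_phi_at_bst as HGphi.
  assert (Gf bst <> 0) by (intro h; rewrite h in HGphi; nra).
  field_simplify_eq; [nra | split; lra].
Qed.

Lemma Gf_crossing (c : R) : 0 < c -> Gf bst <= c ->
  exists z, bst <= z /\ Gf z = c /\
    forall y, bst <= y -> (y < z -> Gf y < c) /\ (z < y -> c < Gf y).
Proof.
  intros Hc Hlow. set (M := Rmax bst (c / a1 ^ 2)).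
  assert (HM : c <= Gf M).
  { assert (c / a1 ^ 2 <= M) by apply Rmax_r.
    assert (1 + a1 * M <= exp (a1 * M)) by (apply exp_ineq1_le).
    assert (a1 ^ 2 * (c / a1 ^ 2) = c) by (field; lra).
    assert (a1 ^ 2 * (c / a1 ^ 2) <= a1 ^ 2 * M) by (apply Rmult_le_compat_l; [apply pow_le | ]; lra).
    assert (a1 * (1 + a1 * M) <= a1 * exp (a1 * M)) by (apply Rmult_le_compat_l; lra).
    assert (0 < - a2 * exp (a2 * M)) by (pose proof (exp_pos (a2 * M)); nra).
    unfold Gf. nra. }
  destruct (IVT_cor (fun y => Gf y - c) bst M) as [z [Hz Hzc]].
  - intros t. apply continuity_pt_minus; [apply Gf_continuous | apply continuity_pt_const].
    intros u v; reflexivity.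
  - apply Rmax_l.
  - nra.
  - exists z. split; [lra | split; [lra|]]. intros y Hy. split; intros Hyz.
    + pose proof (Gf_increasing y z Hy Hyz). lra.
    + pose proof (Gf_increasing z y ltac:(lra) Hyz). lra.
Qed.

Section Threshold.

Variables k bss : R.
Hypothesis k_pos : 0 < k.
Hypothesis bss_pos : 0 < bss.
Hypothesis phi_bss : phi bss = k * (a1 - a2).

Lemma Gf_bss_sign :
  (Gf bss <= (a1 - a2) / k <-> bss <= bst) /\ (Gf bss >= (a1 - a2) / k <-> bss >= bst).
Proof.
  pose proof (G_phi_identity bss) as Hid. rewrite phi_bss in Hid.
  pose proof (exp_gap_pos bss bss_pos). pose proof (exp_pos (a2 * bss)).
  set (D := exp (a1 * bss) - exp (a2 * bss)) in Hid.
  set (P := (a1 - a2) * (exp (a1 * bss) * exp (a2 * bss))).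
  assert (HD : 0 < D) by (unfold D; lra).
  assert (HP : 0 < P) by (apply Rmult_lt_0_compat; [lra | apply Rmult_lt_0_compat; lra]).
  assert (Hsign : P * (k * Gf bss - (a1 - a2)) = dGf bss * D) by (rewrite <- Hid; unfold P; ring).
  rewrite le_div_iff, ge_div_iff by lra.
  destruct (dGf_sign bss) as [Hneg Hpos].
  destruct (Rtotal_order bss bst) as [h|[h|h]].
  - assert (k * Gf bss - (a1 - a2) < 0) by (specialize (Hneg h); nra).
    split; split; intros; lra.
  - assert (Hzero : dGf bss = 0) by (rewrite h; apply dGf_bst).
    rewrite Hzero, Rmult_0_l in Hsign.
    assert (k * Gf bss - (a1 - a2) = 0) by nra. split; split; intros; lra.
  - assert (0 < k * Gf bss - (a1 - a2)) by (specialize (Hpos h); nra).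
    split; split; intros; lra.
Qed.

Lemma condK_bss_iff :
  (k <= phi bst / (a1 - a2) <-> bss <= bst) /\ (k >= phi bst / (a1 - a2) <-> bss >= bst).
Proof.
  pose proof bst_pos.
  rewrite le_div_iff, ge_div_iff by lra. rewrite (Rmult_comm (a1 - a2)), <- phi_bss.
  pose proof (phi_le_iff bss bst) as Hle. pose proof (phi_le_iff bst bss) as Hge.
  split; split; intros; [apply Hle | apply Hle | apply Rle_ge, Hge | apply Rle_ge, Hge];
    lra.
Qed.

Lemma Gf_ge_after_bss (y : R) : bst <= bss -> bss <= y -> (a1 - a2) / k <= Gf y.
Proof.
  intros Hb Hy. assert (Gf bss >= (a1 - a2) / k) by (apply Gf_bss_sign; lra).
  destruct (Req_dec y bss) as [->|]; [lra|].
  pose proof (Gf_increasing bss y Hb ltac:(lra)). lra.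
Qed.

Lemma Gf_level_above_bss : bss <= bst ->
  exists z, bss <= z /\ Gf z = (a1 - a2) / k /\
    forall y, bss <= y ->
      (Gf y <= (a1 - a2) / k <-> y <= z) /\ (Gf y = (a1 - a2) / k -> y = z).
Proof.
  intros Hb. set (c := (a1 - a2) / k).
  assert (Hc : 0 < c) by (apply Rdiv_lt_0_compat; lra).
  destruct Gf_bss_sign as [Hle Hge]. fold c in Hle, Hge.
  assert (Hbelow : forall y, bss <= y < bst -> Gf y < c).
  { intros y Hy.
    assert (Gf bss < c).
    { destruct (Rlt_dec (Gf bss) c) as [|Hnlt]; [assumption|].
      apply Rnot_lt_ge, Hge in Hnlt. lra. }
    destruct (Req_dec y bss) as [->|]; [lra|].
    pose proof (Gf_decreasing bss y ltac:(lra) ltac:(lra)). lra. }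
  assert (Hbst : Gf bst <= c).
  { destruct (Req_dec bss bst) as [<-|]; [apply Hle; lra|].
    pose proof (Gf_decreasing bss bst ltac:(lra) ltac:(lra)). apply Hle in Hb. lra. }
  destruct (Gf_crossing c Hc Hbst) as [z [Hz [Gz Hcross]]].
  exists z. split; [lra | split; [exact Gz|]]. intros y Hy.
  destruct (Rlt_dec y bst) as [h|h].
  - pose proof (Hbelow y ltac:(lra)). split; [split|]; intros; lra.
  - destruct (Hcross y ltac:(lra)) as [Hlt Hgt].
    destruct (Rtotal_order y z) as [h'|[h'|h']].
    + pose proof (Hlt h'). split; [split|]; intros; lra.
    + subst; split; [split|]; intros; lra.
    + pose proof (Hgt h'). split; [split|]; intros; lra.
Qed.

End Threshold.

End Dominant.

(* The function H(.; b) with b = b_r \/ bss already substituted. *)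
Section ValueFunction.

Variables k b : R.
Hypothesis k_ge1 : 1 <= k.
Hypothesis b_pos : 0 < b.

Definition Hlow (y : R) : R :=
  / (exp (a1 * b) - exp (a2 * b)) *
  ((1 - k * exp (a2 * b)) / a1 * exp (a1 * y) - (1 - k * exp (a1 * b)) / a2 * exp (a2 * y)).
Definition dHlow (y : R) : R :=
  / (exp (a1 * b) - exp (a2 * b)) *
  ((1 - k * exp (a2 * b)) * exp (a1 * y) - (1 - k * exp (a1 * b)) * exp (a2 * y)).
Definition Hf (x : R) : R := if Rle_dec x b then Hlow x else x - b + Hlow b.

Lemma Hlow_derivative (y : R) : derivable_pt_lim Hlow y (dHlow y).
Proof.
  pose proof (exp_gap_pos b b_pos).
  apply is_derive_Reals. unfold Hlow, dHlow. auto_derive; [exact I|].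
  field. repeat split; lra.
Qed.

(* H is smooth-fit at b: both branches have slope 1 there. *)
Lemma dHlow_at_b : dHlow b = 1.
Proof. pose proof (exp_gap_pos b b_pos). unfold dHlow. field. lra. Qed.

(* Write U = e^{a1 b}, V = e^{a2 b}, u = e^{a1 y}, v = e^{a2 y}, P = 1 - kV,
   Q = 1 - kU.  For y <= b we have vU >= uV and Q < 0, hence
   U (P u - Q v) >= u (P U - Q V) = u (U - V) > 0. *)
Lemma dHlow_pos (y : R) : y <= b -> 0 < dHlow y.
Proof.
  intros Hy. pose proof (exp_gap_pos b b_pos) as HUV.
  pose proof (exp_pos (a1 * b)). pose proof (exp_pos (a2 * b)).
  pose proof (exp_pos (a1 * y)). pose proof (exp_pos (a2 * y)).
  assert (HU : 1 < exp (a1 * b)) by (rewrite <- exp_0; apply exp_increasing; nra).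
  assert (Hcross : exp (a1 * y) * exp (a2 * b) <= exp (a2 * y) * exp (a1 * b)).
  { rewrite <- !exp_plus.
    destruct (Req_dec y b) as [->|]; [right; f_equal; ring|].
    left. apply exp_increasing. nra. }
  unfold dHlow. apply Rmult_lt_0_compat; [apply Rinv_0_lt_compat; lra|].
  apply (Rmult_lt_reg_l (exp (a1 * b))); [lra|]. rewrite Rmult_0_r.
  assert (Hq : 0 < k * exp (a1 * b) - 1) by nra.
  nra.
Qed.

Lemma Hf_derivative_pos (x : R) : exists l, derivable_pt_lim Hf x l /\ 0 < l.
Proof.
  destruct (Rtotal_order x b) as [h|[->|h]].
  - exists (dHlow x). split; [|apply dHlow_pos; lra].
    apply (derivable_pt_lim_locally_ext Hlow Hf x (x - 1) b); [lra| |apply Hlow_derivative].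
    intros z Hz. unfold Hf. destruct (Rle_dec z b); [reflexivity | lra].
  - exists 1. split; [|lra].
    apply (derivable_pt_lim_glue _ Hlow (fun y => y - b + Hlow b)).
    + rewrite <- dHlow_at_b. apply Hlow_derivative.
    + apply is_derive_Reals. auto_derive; auto.
    + cbv beta. ring.
    + intros y Hy. unfold Hf. destruct (Rle_dec y b); [reflexivity | lra].
    + intros y Hy. unfold Hf. destruct (Rle_dec y b); [lra | reflexivity].
  - exists 1. split; [|lra].
    apply (derivable_pt_lim_locally_ext (fun y => y - b + Hlow b) Hf x b (x + 1)); [lra| |].
    + intros z Hz. unfold Hf. destruct (Rle_dec z b); [lra | reflexivity].
    + apply is_derive_Reals. auto_derive; auto.
Qed.

(* (II): (-a1 a2)(e^{a1 b} - e^{a2 b}) H(0) = (a1 - a2) - k G(b). *)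
Lemma Hf0_sign :
  (0 <= Hf 0 <-> Gf b <= (a1 - a2) / k) /\ (Hf 0 <= 0 <-> Gf b >= (a1 - a2) / k).
Proof.
  pose proof (exp_gap_pos b b_pos).
  assert (H0 : Hf 0 * ((exp (a1 * b) - exp (a2 * b)) * (a1 * - a2)) = (a1 - a2) - k * Gf b).
  { unfold Hf, Hlow, Gf. destruct (Rle_dec 0 b); [|lra].
    rewrite !Rmult_0_r, exp_0. field. lra. }
  assert (0 < (exp (a1 * b) - exp (a2 * b)) * (a1 * - a2)) by (apply Rmult_lt_0_compat; nra).
  rewrite le_div_iff, ge_div_iff by lra. split; split; intros; nra.
Qed.

End ValueFunction.

End Roots.

(* The roots r1, r2 satisfy r2 < 0 < r1 and r1 + r2 = -2 mu / sigma^2 < 0. *)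
Lemma roots_facts (mu sigma alpha : R) : 0 < mu -> 0 < sigma -> 0 < alpha ->
  0 < r1 mu sigma alpha /\ r2 mu sigma alpha < 0 /\ r1 mu sigma alpha + r2 mu sigma alpha < 0.
Proof.
  intros Hmu Hsigma Halpha. unfold r1, r2.
  set (m := mu / sigma ^ 2). set (p := 2 * alpha / sigma ^ 2).
  assert (0 < m) by (apply Rdiv_lt_0_compat; [lra | apply pow_lt; lra]).
  assert (0 < p) by (apply Rdiv_lt_0_compat; [lra | apply pow_lt; lra]).
  replace (mu ^ 2 / sigma ^ 4) with (m ^ 2) by (unfold m; field; lra).
  replace (- mu / sigma ^ 2) with (- m) by (unfold m; field; lra).
  assert (Hd : 0 <= m ^ 2 + p) by nra.
  pose proof (sqrt_sqrt _ Hd). pose proof (sqrt_pos (m ^ 2 + p)).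
  assert (m < sqrt (m ^ 2 + p)) by nra.
  lra.
Qed.

Lemma condK_phi (mu sigma alpha k : R) : 0 < mu -> 0 < sigma -> 0 < alpha ->
  let a1 := r1 mu sigma alpha in let a2 := r2 mu sigma alpha in
  (condK mu sigma alpha k <-> k <= phi a1 a2 (bst a1 a2) / (a1 - a2)) /\
  (condK_rev mu sigma alpha k <-> k >= phi a1 a2 (bst a1 a2) / (a1 - a2)).
Proof.
  intros Hmu Hsigma Halpha a1 a2.
  destruct (roots_facts mu sigma alpha Hmu Hsigma Halpha) as [Ha1 [Ha2 Hsum]].
  unfold condK, condK_rev, Kbound. fold a1 a2. rewrite Kbound_phi by assumption. tauto.
Qed.

Theorem mainTheorem4 (mu sigma alpha k bss : R)
  (Hmu : 0 < mu) (Hsigma : 0 < sigma) (Halpha : 0 < alpha) (Hk : 1 < k)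
  (Hbss_pos : 0 < bss) (Hbss : bss_eq mu sigma alpha k bss) :
  let a1 := r1 mu sigma alpha in
  let a2 := r2 mu sigma alpha in
  let c := (a1 - a2) / k in
  (* (I) *)
  (forall br x, 0 <= br -> 0 <= x ->
     exists l, derivable_pt_lim (Hfun mu sigma alpha k bss br) x l /\ 0 < l) /\
  (* (II) *)
  (forall br, 0 <= br ->
     (0 <= Hfun mu sigma alpha k bss br 0 <-> G mu sigma alpha (Rmax br bss) <= c) /\
     (Hfun mu sigma alpha k bss br 0 <= 0 <-> G mu sigma alpha (Rmax br bss) >= c)) /\
  (* (III) *)
  ((condK mu sigma alpha k <-> bss <= bstar mu sigma alpha) /\
   (bss <= bstar mu sigma alpha <-> G mu sigma alpha bss <= c) /\
   (condK_rev mu sigma alpha k <-> bss >= bstar mu sigma alpha) /\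
   (bss >= bstar mu sigma alpha <-> G mu sigma alpha bss >= c)) /\
  (* (IV) *)
  (forall br, 0 <= br -> br <= bss ->
     (0 <= Hfun mu sigma alpha k bss br 0 <-> condK mu sigma alpha k) /\
     (Hfun mu sigma alpha k bss br 0 <= 0 <-> condK_rev mu sigma alpha k)) /\
  (* (V) *)
  (condK_rev mu sigma alpha k ->
     forall br, 0 <= br -> Hfun mu sigma alpha k bss br 0 <= 0) /\
  (* (VI) *)
  (condK mu sigma alpha k ->
     exists bh, bss <= bh /\ G mu sigma alpha bh = c /\
       (forall y, bss <= y -> G mu sigma alpha y = c -> y = bh) /\
       (forall br, 0 <= br ->
          (0 <= Hfun mu sigma alpha k bss br 0 <-> br <= bh))).
Proof.
  intros a1 a2 c.
  destruct (roots_facts mu sigma alpha Hmu Hsigma Halpha) as [Ha1 [Ha2 Hsum]].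
  destruct (condK_phi mu sigma alpha k Hmu Hsigma Halpha) as [HK HKrev].
  fold a1 a2 in Ha1, Ha2, Hsum, HK, HKrev.
  destruct (Gf_bss_sign a1 a2 Ha1 Ha2 Hsum k bss ltac:(lra) Hbss_pos Hbss) as [HGle HGge].
  destruct (condK_bss_iff a1 a2 Ha1 Ha2 Hsum k bss Hbss_pos Hbss) as [HKle HKge].
  fold c in HGle, HGge.
  assert (HII : forall br, (0 <= Hf a1 a2 k (Rmax br bss) 0 <-> Gf a1 a2 (Rmax br bss) <= c) /\
                           (Hf a1 a2 k (Rmax br bss) 0 <= 0 <-> Gf a1 a2 (Rmax br bss) >= c)).
  { intros br. apply Hf0_sign; [lra.. | pose proof (Rmax_r br bss); lra]. }
  change (Hfun mu sigma alpha k bss) with (fun br => Hf a1 a2 k (Rmax br bss)).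
  change (G mu sigma alpha) with (Gf a1 a2). change (bstar mu sigma alpha) with (bst a1 a2).
  cbv beta. setoid_rewrite HK. setoid_rewrite HKrev. setoid_rewrite HKle. setoid_rewrite HKge.
  split; [|split; [|split; [|split; [|split]]]].
  - intros br x _ _. apply Hf_derivative_pos; [lra.. | pose proof (Rmax_r br bss); lra].
  - intros br _. apply HII.
  - tauto.
  - intros br _ Hbr. specialize (HII br). rewrite (Rmax_right br bss Hbr) in HII |- *.
    rewrite <- HGle, <- HGge. exact HII.
  - intros Hge br _. apply HII, Rle_ge.
    apply (Gf_ge_after_bss a1 a2 Ha1 Ha2 Hsum k bss ltac:(lra) Hbss_pos Hbss); [lra | apply Rmax_r].
  - intros Hle.
    destruct (Gf_level_above_bss a1 a2 Ha1 Ha2 Hsum k bss ltac:(lra) Hbss_pos Hbss Hle)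
      as [z [Hz [Gz Hlevel]]].
    fold c in Gz, Hlevel. exists z. split; [exact Hz | split; [exact Gz | split]].
    + intros y Hy. apply (Hlevel y Hy).
    + intros br _. rewrite (proj1 (HII br)), (proj1 (Hlevel _ (Rmax_r br bss))).
      pose proof (Rmax_l br bss). split; intros; [lra | apply Rmax_lub; lra].
Qed.
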